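(* Let $n=6$, $j_0=1$ and $j_i=3$ for all $i\in\mathbb Z/(6)\setminus\{0\}$. Define $\sigma_{(i,j)}(k,l)=(k+j,\ l-j_{k+j-i})$ on $X=(\mathbb Z/(6))^2$ and $r((i,j),(k,l))=(\sigma_{(i,j)}(k,l),\sigma^{-1}_{\sigma_{(i,j)}(k,l)}(i,j))$. Then $(X,r)$ is an indecomposable and irretractable solution of the YBE which is not simple.
   Context: A solution of the YBE is a pair $(X,r)$, $X$ nonempty, $r:X\times X\to X\times X$, $r(x,y)=(\sigma_x(y),\gamma_y(x))$, with $r^2=\mathrm{id}$, all $\sigma_x,\gamma_x$ bijective, and $r_{12}r_{23}r_{12}=r_{23}r_{12}r_{23}$ on $X^3$. Indecomposable: $\langle\sigma_x\rangle\le \mathrm{Sym}_X$ transitive on $X$. Irretractable: $\sigma_x\ne\sigma_y$ for $x\ne y$. A homomorphism of solutions $f:(X,r)\to(Y,s)$ (with $s(t,z)=(\sigma'_t(z),\gamma'_z(t))$) is a map with $f(\sigma_x(y))=\sigma'_{f(x)}(f(y))$; $(X,r)$ is simple if $|X|>1$ and every surjective homomorphism of solutions $f:(X,r)\to(Y,s)$ is bijective or has $|Y|=1$. *)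

From mathcomp Require Import all_boot all_order all_algebra.
From Stdlib Require Import Relations.
Set Implicit Arguments. Unset Strict Implicit. Unset Printing Implicit Defensive.
Import GRing.Theory.
Local Open Scope ring_scope.

Section YBE.
Variable X : Type.
Variable r : X * X -> X * X.

Definition ybe_sigma (x : X) : X -> X := fun y => (r (x, y)).1.
Definition ybe_gamma (y : X) : X -> X := fun x => (r (x, y)).2.

Definition r12 (t : X * X * X) : X * X * X :=
  let: (x, y, z) := t in let: (a, b) := r (x, y) in (a, b, z).
Definition r23 (t : X * X * X) : X * X * X :=
  let: (x, y, z) := t in let: (b, c) := r (y, z) in (x, b, c).

Definition is_solution : Prop :=
  [/\ inhabited X,
      (forall p, r (r p) = p),
      (forall x, bijective (ybe_sigma x)),
      (forall x, bijective (ybe_gamma x)) &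
      (forall t, r12 (r23 (r12 t)) = r23 (r12 (r23 t)))].

Definition sigma_step (a b : X) : Prop :=
  exists z, ybe_sigma z a = b \/ ybe_sigma z b = a.

(* the group <sigma_x | x in X> acts transitively on X:
   every y lies in the orbit of every x (orbit = reflexive-transitive closure
   of the steps by generators and their inverses) *)
Definition indecomposable : Prop :=
  forall x y : X, clos_refl_trans X sigma_step x y.

Definition irretractable : Prop :=
  forall x y : X, x <> y -> ybe_sigma x <> ybe_sigma y.
End YBE.

Definition sol_hom (X Y : Type) (r : X * X -> X * X) (s : Y * Y -> Y * Y)
  (f : X -> Y) : Prop :=
  forall x y : X, f (ybe_sigma r x y) = ybe_sigma s (f x) (f y).

Definition simple_solution (X : Type) (r : X * X -> X * X) : Prop :=
  (exists x y : X, x <> y) /\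
  forall (Y : Type) (s : Y * Y -> Y * Y) (f : X -> Y),
    is_solution s -> sol_hom r s f -> (forall y, exists x, f x = y) ->
    bijective f \/ (exists y0 : Y, forall y, y = y0).

Definition Z6 := 'Z_6.

Definition jj (i : Z6) : Z6 := if i == 0 then 1 else 3%:R.

Definition X6 := (Z6 * Z6)%type.

Definition sig6 (x y : X6) : X6 :=
  let: (i, j) := x in let: (k, l) := y in (k + j, l - jj (k + j - i)).

Definition sig6_inv (x y : X6) : X6 :=
  let: (i, j) := x in let: (a, b) := y in (a - j, b + jj (a - i)).

Lemma sig6K x : cancel (sig6 x) (sig6_inv x).
Proof. case: x => i j [k l] /=. by rewrite addrK subrK. Qed.

Lemma sig6_invK x : cancel (sig6_inv x) (sig6 x).
Proof. case: x => i j [a b] /=. by rewrite subrK addrK. Qed.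

Definition r6 (p : X6 * X6) : X6 * X6 :=
  let: (x, y) := p in (sig6 x y, sig6_inv (sig6 x y) x).

From mathcomp Require Import all_boot all_order all_algebra.
From Stdlib Require Import Relations.
Set Implicit Arguments. Unset Strict Implicit. Unset Printing Implicit Defensive.
Import GRing.Theory.
Local Open Scope ring_scope.

(* The solution r6 is an instance of two general constructions.

   1. (Rump's cycle sets.)  If sigma_x are bijections of a set X satisfying
      the cycle condition  sigma_x sigma_{sigma_x^-1 y} = sigma_y sigma_{sigma_y^-1 x},
      then r(x,y) = (sigma_x y, sigma^-1_{sigma_x y} x) is involutive and
      satisfies the braid relation; with right non-degeneracy it is a solution.

   2. (A family over an abelian group G.)  For any even c : G -> G,
      sigma_(i,j)(k,l) = (k + j, l - c(k + j - i)) satisfies the cycle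
      condition, and gamma_(k,l) is an explicit "shear" with explicit inverse.
      If c 0 generates G the solution is indecomposable; if c takes the value
      c 0 only at 0 it is irretractable; and a parity-like map chi : G -> bool
      flipped by every value of c gives a homomorphism (k,l) |-> chi l onto
      the two-element solution (x,y) |-> (~~ y, ~~ x).

   The theorem is the case G = Z/(6), c = j: j is even, j 0 = 1 generates
   Z/(6), j t = 3 <> 1 for t <> 0, and every j t is odd, so reducing the
   second coordinate mod 2 is a non-injective surjection onto a solution
   with two elements, whence r6 is not simple. *)

Section CycleSetSolution.
Variables (X : Type) (sigma sigma_inv : X -> X -> X).
Hypotheses (sigmaK : forall x, cancel (sigma x) (sigma_inv x))
           (sigma_invK : forall x, cancel (sigma_inv x) (sigma x)).

Definition cycle_r (p : X * X) : X * X :=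
  let: (x, y) := p in (sigma x y, sigma_inv (sigma x y) x).

Lemma cycle_r_invol p : cycle_r (cycle_r p) = p.
Proof. by case: p => x y; rewrite /cycle_r sigma_invK sigmaK. Qed.

Hypothesis cycle : forall x y z,
  sigma x (sigma (sigma_inv x y) z) = sigma y (sigma (sigma_inv y x) z).

Lemma cycle_inv x y z :
  sigma_inv (sigma_inv x y) (sigma_inv x z) =
  sigma_inv (sigma_inv y x) (sigma_inv y z).
Proof.
apply: (can_inj (sigmaK (sigma_inv y x))); apply: (can_inj (sigmaK y)).
by rewrite -cycle !sigma_invK.
Qed.

(* The cycle condition implies the braid relation, component by component:
   the first components agree by the cycle condition, the other two by its
   inverse form. *)
Lemma cycle_r_braid t :
  r12 cycle_r (r23 cycle_r (r12 cycle_r t)) =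
  r23 cycle_r (r12 cycle_r (r23 cycle_r t)).
Proof.
case: t => [[x y] z]; rewrite /r12 /r23 /cycle_r /=.
set s := sigma x y; set tau := sigma_inv s x.
have first : sigma s (sigma tau z) = sigma x (sigma y z).
  by rewrite /tau cycle /s sigmaK.
rewrite first; set w := sigma x (sigma y z).
have second :
    sigma_inv w s = sigma (sigma_inv w x) (sigma_inv (sigma y z) y).
  by rewrite -[LHS](sigma_invK (sigma_inv w x)) cycle_inv /w /s !sigmaK.
by rewrite -second cycle_inv /w -first sigmaK.
Qed.

(* Left non-degeneracy and involutivity are built in, so only right
   non-degeneracy remains to be checked. *)
Lemma cycle_r_solution :
  inhabited X -> (forall y, bijective (ybe_gamma cycle_r y)) ->
  is_solution cycle_r.
Proof.
move=> inhX gamma_bij; split=> //; first exact: cycle_r_invol.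
- by move=> x; exists (sigma_inv x); [exact: sigmaK | exact: sigma_invK].
- exact: cycle_r_braid.
Qed.
End CycleSetSolution.

Definition flip2 : (bool * bool -> bool * bool)%type :=
  cycle_r (fun _ => negb) (fun _ => negb).

Lemma flip2_solution : is_solution flip2.
Proof.
apply: cycle_r_solution; [exact: (fun _ => negbK) | exact: (fun _ => negbK) |
  by [] | exact: inhabits true | ].
by move=> y; exists negb => x; apply: negbK.
Qed.

Lemma not_simple_of_quotient (X Y : Type) (r : X * X -> X * X)
    (s : Y * Y -> Y * Y) (f : X -> Y) :
  is_solution s -> sol_hom r s f -> (forall y, exists x, f x = y) ->
  (exists x1 x2, x1 <> x2 /\ f x1 = f x2) -> (exists y1 y2 : Y, y1 <> y2) ->
  ~ simple_solution r.
Proof.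
move=> sol_s hom_f surj_f [x1 [x2 [nx fx]]] [y1 [y2 ny]] [_ simple_r].
case: (simple_r Y s f sol_s hom_f surj_f) => [[g fK _] | [y0 all_y0]].
- exact/nx/(can_inj fK).
- by apply: ny; rewrite (all_y0 y1) (all_y0 y2).
Qed.

Section AffineFamily.
Variables (G : zmodType) (c : G -> G).

Definition fsig (x y : G * G) : G * G :=
  let: (i, j) := x in let: (k, l) := y in (k + j, l - c (k + j - i)).
Definition fsig_inv (x y : G * G) : G * G :=
  let: (i, j) := x in let: (a, b) := y in (a - j, b + c (a - i)).

Lemma fsigK x : cancel (fsig x) (fsig_inv x).
Proof. by case: x => i j [k l] /=; rewrite addrK subrK. Qed.

Lemma fsig_invK x : cancel (fsig_inv x) (fsig x).
Proof. by case: x => i j [a b] /=; rewrite subrK addrK. Qed.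

Local Notation fam_r := (cycle_r fsig fsig_inv).

Hypothesis c_even : forall t, c (- t) = c t.

(* Both sides of the cycle condition add the same two values of c (in
   opposite orders) to the second coordinate. *)
Lemma fsig_cycle x y z :
  fsig x (fsig (fsig_inv x y) z) = fsig y (fsig (fsig_inv y x) z).
Proof.
case: x y z => i j [k l] [p q] /=.
rewrite -[i - k]opprB c_even; set e := c (k - i).
have swap : p + l + e + j = p + j + e + l.
  by rewrite addrAC [p + l + j]addrAC [RHS]addrAC.
by rewrite !opprB !addrA swap; congr (_, _); exact: addrAC.
Qed.

(* gamma_(k,l) shifts the invariant k + j - i of (i,j) by l. *)
Lemma shear_shift (k j i e l : G) :
  k + (j + e) - (i - (l - e)) = k + j - i + l.
Proof. by rewrite opprB !addrA [k + j + e + l]addrAC addrK addrAC. Qed.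

(* gamma_(k,l)(i,j) = (i - (l - e), j + e) with e = c(k + j - i); since the
   invariant moves by l, e can be recovered from the image. *)
Definition fgamma_inv (y z : G * G) : G * G :=
  let: (k, l) := y in let: (a, b) := z in
  let e := c (k + b - a - l) in (a + (l - e), b - e).

Lemma fgammaK y : cancel (ybe_gamma fam_r y) (fgamma_inv y).
Proof.
case: y => k l [i j] /=.
rewrite -[i - (k + j)]opprB c_even; set e := c (k + j - i).
by rewrite shear_shift addrK subrK addrK.
Qed.

Lemma fgamma_invK y : cancel (fgamma_inv y) (ybe_gamma fam_r y).
Proof.
case: y => k l [a b]; rewrite /ybe_gamma /=; set e := c (k + b - a - l).
have dE : k + (b - e) - (a + (l - e)) = k + b - a - l.
  apply/eqP; rewrite eq_sym subr_eq -(shear_shift k (b - e) (a + (l - e)) e l).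
  by rewrite subrK addrK.
by rewrite -[a + (l - e) - (k + (b - e))]opprB c_even dE -/e addrK subrK.
Qed.

Lemma fam_solution : is_solution fam_r.
Proof.
apply: cycle_r_solution; [exact: fsigK | exact: fsig_invK | exact: fsig_cycle |
  exact: inhabits (0, 0) | ].
by move=> y; exists (fgamma_inv y); [exact: fgammaK | exact: fgamma_invK].
Qed.

Section Transitivity.
Variable g : G.
Hypotheses (c0 : c 0 = g) (g_gen : forall a, exists m, a = g *+ m).

Local Notation reach := (clos_refl_trans (G * G) (sigma_step fam_r)).

(* sigma_(k,0) fixes the first coordinate k and subtracts c 0 = g. *)
Lemma reach_second_mul k l m : reach (k, l) (k, l - g *+ m).
Proof.
elim: m => [|m IHm]; first by rewrite subr0; apply: rt_refl.
apply: (rt_trans _ _ _ _ _ IHm); apply: rt_step; exists (k, 0); left.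
by rewrite /ybe_sigma /= addr0 subrr c0 mulrSr opprD addrA.
Qed.

Lemma reach_second k l l' : reach (k, l) (k, l').
Proof.
have [m lE] := g_gen (l - l').
by have := reach_second_mul k l m; rewrite -lE subKr.
Qed.

(* sigma_(0,g) adds g to the first coordinate. *)
Lemma reach_first_mul k l l' m : reach (k, l) (k + g *+ m, l').
Proof.
elim: m l' => [|m IHm] l'; first by rewrite addr0; apply: reach_second.
apply: (rt_trans _ _ _ _ _ (IHm 0)).
apply: (rt_trans _ _ _ _ _ _ (reach_second _ _ l')); apply: rt_step.
by exists (0, g); left; rewrite /ybe_sigma /= mulrSr addrA.
Qed.

Lemma fam_indecomposable : indecomposable fam_r.
Proof.
move=> [k l] [k' l']; have [m kE] := g_gen (k' - k).
by rewrite -(subrK k k') kE addrC; apply: reach_first_mul.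
Qed.
End Transitivity.

(* If c 0 is taken only at 0, then sigma_(i,j) determines j (first
   coordinate) and then i (second coordinate at k = i - j). *)
Lemma fam_irretractable :
  (forall t, c t = c 0 -> t = 0) -> irretractable fam_r.
Proof.
move=> c_sep [i j] [i' j'] neq /(congr1 (@^~ (i - j, 0))) /=; case.
rewrite subrK => jE; have {}jE : j = j' by apply: (addrI (i - j)); rewrite -jE subrK.
rewrite -jE subrK subrr !sub0r => /oppr_inj /esym /c_sep /subr0_eq iE.
by apply: neq; rewrite iE jE.
Qed.

Lemma fam_parity_hom (chi : G -> bool) :
  (forall l t, chi (l - c t) = ~~ chi l) -> sol_hom fam_r flip2 (fun x => chi x.2).
Proof. by move=> chi_flip [i j] [k l]; rewrite /ybe_sigma /= chi_flip. Qed.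
End AffineFamily.

Lemma r6E : r6 = cycle_r (@fsig Z6 jj) (fsig_inv jj).
Proof. by []. Qed.

Lemma jj_even t : jj (- t) = jj t.
Proof. by rewrite /jj oppr_eq0. Qed.

Lemma jj_sep t : jj t = jj 0 -> t = 0.
Proof. by rewrite /jj eqxx; case: eqP. Qed.

Lemma Z6_generated (a : Z6) : exists m, a = jj 0 *+ m.
Proof. by exists (val a); rewrite /jj eqxx natr_Zp. Qed.

(* Parity is additive on Z/(6) since 6 is even, and all values of j are odd. *)
Lemma odd_subZ6 (l a : Z6) : odd (val (l - a)) = odd (val l) (+) odd (val a).
Proof. by rewrite /= !odd_mod // oddD odd_mod // oddN // ltnW. Qed.

Lemma jj_odd t : odd (val (jj t)).
Proof. by rewrite /jj; case: (t == 0). Qed.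

Theorem mainTheorem7 :
  [/\ is_solution r6, indecomposable r6, irretractable r6 & ~ simple_solution r6].
Proof.
rewrite r6E; split.
- exact/fam_solution/jj_even.
- exact: (fam_indecomposable erefl Z6_generated).
- exact/fam_irretractable/jj_sep.
- apply: (not_simple_of_quotient flip2_solution
           (fam_parity_hom (chi := fun l : Z6 => odd (val l)) _)).
  + by move=> l t; rewrite odd_subZ6 jj_odd addbT.
  + by case; [exists (0, 1) | exists (0, 0)].
  + by exists (0, 0), (0, 2%:R).
  + by exists true, false.
Qed.
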